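(* Fix a distribution of $(X,Y)$ on $\mathcal{X}\times\{0,1\}$ with expectation $\mathbb{E}$, let $\mathcal{L}(F,y)=-[y\log\mu(F)+(1-y)\log(1-\mu(F))]$ be the log loss with $\mu(F)=1/(1+e^{-F})$, and let $\mathcal{H}$ be a set of group membership functions $h:\mathcal{X}\to\{0,1\}$. Let $F_T,F_{T+1}:\mathcal{X}\to\mathbb{R}$ be logit predictors, $f_T=\mu\circ F_T$, and let $\mathcal{W}$ be a class of weak learners $\phi:\mathcal{X}\times[0,1]\to\mathbb{R}$ such that for every $h\in\mathcal{H}$ and $g\in\mathcal{G}$ the function $(x,v)\mapsto h(x)g(v)$ belongs to $\mathcal{W}$. Define $\mathcal{L}^*_T=\inf\big\{\mathbb{E}[\mathcal{L}(F_T(X)+\sum_{k=1}^K w_k\phi_k(X,f_T(X)),Y)] : K\in\mathbb{N},\ w\in\mathbb{R}^K,\ \phi_1,\dots,\phi_K\in\mathcal{W}\big\}$, $\epsilon_T=\mathbb{E}[\mathcal{L}(F_{T+1}(X),Y)]-\mathcal{L}^*_T$, and $$C_T^2=\max_{h\in\mathcal{H},\,g\in\mathcal{G}}\frac{\mathbb{E}[g(f_T(X))\mid h(X)=1]}{\mathbb{E}[f_T(X)(1-f_T(X))\mid h(X)=1]}.$$ Then $f_T$ is $\alpha$-multicalibrated with respect to $\mathcal{H}$ for $$\alpha=\frac{2}{\sqrt3}\,C_T\sqrt{2\,\mathbb{E}[|F_{T+1}(X)-F_T(X)|]+\tfrac18\,\mathbb{E}[(F_{T+1}(X)-F_T(X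))^2]+\epsilon_T}.$$
   Context: $\mathcal{G}$ is the set of interval membership functions $g:[0,1]\to\{0,1\}$, $g(v)=\mathbb{1}_I(v)$ for an interval $I\subseteq[0,1]$. A probabilistic predictor $f$ is $\alpha$-multicalibrated with respect to $\mathcal{H}$ if $\big|\mathbb{E}[h(X)g(f(X))(Y-f(X))]\big|\le\alpha\sqrt{\mathbb{E}[h(X)f(X)(1-f(X))]}$ for all $h\in\mathcal{H}$, $g\in\mathcal{G}$. In the paper, $F_{T+1}$ is obtained from $F_T$ by gradient boosting with weak learners in $\mathcal{W}$ (regression trees on the features augmented with $f_T(x)$), and $\mathcal{L}^*_T$ is the loss of the optimal combination of weak learners added to $F_T$. *)

From HB Require Import structures.
From mathcomp Require Import all_boot all_order all_algebra.
From mathcomp Require Import all_classical all_reals all_analysis.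
Set Implicit Arguments. Unset Strict Implicit. Unset Printing Implicit Defensive.
Import Order.TTheory GRing.Theory Num.Theory.
Local Open Scope classical_set_scope.
Local Open Scope ring_scope.

Definition sigmoid {R : realType} (F : R) : R := 1 / (1 + expR (- F)).

Definition logloss {R : realType} (F y : R) : R :=
  - (y * ln (sigmoid F) + (1 - y) * ln (1 - sigmoid F)).

Definition Ex {d} {Omega : measurableType d} {R : realType}
  (P : probability Omega R) (Z : Omega -> R) : R :=
  fine (\int[P]_w (Z w)%:E)%E.

Definition condEx {d} {Omega : measurableType d} {R : realType}
  (P : probability Omega R) (Z : Omega -> R) (A : set Omega) : R :=
  Ex P (fun w => Z w * \1_A w) / fine (P A).

Definition interval_membership {R : realType} (g : R -> R) : Prop :=
  exists I : interval R,
    {subset I <= Interval (BLeft (0:R)) (BRight (1:R))} /\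
    forall v, g v = (if v \in I then 1 else 0).

Definition multicalibrated {d d'} {Omega : measurableType d}
  {Xt : measurableType d'} {R : realType} (P : probability Omega R)
  (X : Omega -> Xt) (Y : Omega -> R) (H : set (Xt -> R)) (f : Xt -> R)
  (alpha : R) : Prop :=
  forall h g, H h -> interval_membership g ->
    `| Ex P (fun w => h (X w) * g (f (X w)) * (Y w - f (X w))) |
      <= alpha * Num.sqrt (Ex P (fun w => h (X w) * f (X w) * (1 - f (X w)))).

Definition Lstar {d d'} {Omega : measurableType d}
  {Xt : measurableType d'} {R : realType} (P : probability Omega R)
  (X : Omega -> Xt) (Y : Omega -> R) (W : set (Xt -> R -> R))
  (FT : Xt -> R) : \bar R :=
  ereal_inf [set r | exists (K : nat) (wt : 'I_K -> R)
                            (phi : 'I_K -> (Xt -> R -> R)),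
     (forall k, W (phi k)) /\
     r = (\int[P]_w (logloss (FT (X w) +
            \sum_(k < K) wt k * phi k (X w) (sigmoid (FT (X w)))) (Y w))%:E)%E].

Definition CT2_ratios {d d'} {Omega : measurableType d}
  {Xt : measurableType d'} {R : realType} (P : probability Omega R)
  (X : Omega -> Xt) (H : set (Xt -> R)) (f : Xt -> R) : set R :=
  [set r | exists (h : Xt -> R) (g : R -> R), H h /\ interval_membership g /\
     (0%E < P [set w | h (X w) = 1%R])%E /\
     r = condEx P (fun w => g (f (X w))) [set w | h (X w) = 1] /
         condEx P (fun w => f (X w) * (1 - f (X w))) [set w | h (X w) = 1]].

(* For a group [h] and an interval [g] let [z = h(X) g(f_T(X))], a 0/1
   variable, and [a = E[z (Y - f_T(X))]]. The learner [t h(x) g(v)] may be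
   added to [F_T], so [L*_T] is at most the expected loss of [F_T + t z], which
   by Hoeffding's lemma is at most [L(F_T) - t a + t^2 E[z] / 8]. Taking
   [t = 4 a / E[z]] gives [2 a^2 <= E[z] (L(F_T) - L*_T)], and since the loss
   is 1-Lipschitz in the logit, [L(F_T) <= L(F_{T+1}) + E|F_{T+1} - F_T|].
   Finally [E[z] / E[h(X) f_T(1 - f_T)]] is one of the ratios defining
   [C_T^2]. *)

From HB Require Import structures.
From mathcomp Require Import all_boot all_order all_algebra.
From mathcomp Require Import all_classical all_reals all_analysis.
From mathcomp Require Import ring lra measurable_realfun.
Set Implicit Arguments.
Unset Strict Implicit.
Unset Printing Implicit Defensive.
Import Order.TTheory GRing.Theory Num.Theory numFieldNormedType.Exports.
Local Open Scope classical_set_scope.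
Local Open Scope ring_scope.

Section softplus.
Context {R : realType}.
Implicit Types f df : R -> R.

Definition softplus (x : R) : R := ln (1 + expR x).

Lemma is_derive_continuous f df :
  (forall x : R, is_derive x (1 : R) f (df x)) -> continuous f.
Proof.
move=> fdf x; have [fx _] := fdf x.
exact/differentiable_continuous/derivable1_diffP.
Qed.

Lemma increment_le_of_derive_le f df (M u v : R) :
  (forall x : R, is_derive x (1 : R) f (df x)) -> u <= v ->
  (forall x, x \in `[u, v] -> df x <= M) -> f v - f u <= M * (v - u).
Proof.
move=> fdf uv dfM.
have fc : {within `[u, v], continuous f}.
  by apply/continuous_subspaceT => x; exact: is_derive_continuous fdf x.
have [c cuv ->] := MVT_segment uv (fun x _ => fdf x) fc.
by rewrite ler_wpM2r ?subr_ge0 ?dfM.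
Qed.

Lemma increment_ge_of_derive_ge f df (m u v : R) :
  (forall x : R, is_derive x (1 : R) f (df x)) -> u <= v ->
  (forall x, x \in `[u, v] -> m <= df x) -> m * (v - u) <= f v - f u.
Proof.
move=> fdf uv mdf.
have := increment_le_of_derive_le (M := - m) (fun x => is_deriveN (fdf x)) uv.
rewrite !fctE -opprD mulNr lerN2; apply=> x xuv.
by rewrite lerN2 mdf.
Qed.

Lemma sigmoidE (x : R) : sigmoid x = (1 + expR (- x))^-1.
Proof. by rewrite /sigmoid div1r. Qed.

Lemma sigmoid_gt0 (x : R) : 0 < sigmoid x.
Proof. by rewrite sigmoidE invr_gt0 addr_gt0 // expR_gt0. Qed.

Lemma sigmoid_lt1 (x : R) : sigmoid x < 1.
Proof. by rewrite sigmoidE invf_lt1 ?addr_gt0 ?expR_gt0 // ltrDl expR_gt0. Qed.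

Lemma sigmoidN (x : R) : sigmoid (- x) = 1 - sigmoid x.
Proof.
rewrite !sigmoidE opprK expRN; have ex0 := expR_gt0 x.
by field; rewrite !gt_eqF ?addr_gt0 ?invr_gt0.
Qed.

Lemma sigmoid_var_le (x : R) : sigmoid x * (1 - sigmoid x) <= 4^-1.
Proof.
rewrite -subr_ge0; set p := sigmoid x.
have -> : 4^-1 - p * (1 - p) = (p - 2^-1) ^+ 2 by field.
exact: sqr_ge0.
Qed.

Lemma is_derive_softplus (x : R) : is_derive x 1 softplus (sigmoid x).
Proof.
have -> : softplus = @ln R \o (fun y => 1 + expR y) by [].
apply: is_derive_eq; first exact/is_derive1_comp/is_derive1_ln.
rewrite add0r mul1r sigmoidE expRN; have ex0 := expR_gt0 x.
by field; rewrite !gt_eqF ?addr_gt0.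
Qed.

Lemma is_derive_sigmoid (x : R) :
  is_derive x 1 sigmoid (sigmoid x * (1 - sigmoid x)).
Proof.
have -> : @sigmoid R = (fun y => (1 + expR (- y))^-1).
  by apply/funext => y; rewrite sigmoidE.
have ex0 := expR_gt0 (- x).
have hD : is_derive x (1 : R) (cst (1 : R) + (expR \o -%R)) (0 + expR (- x) * -1).
  by apply: is_deriveD; apply: is_derive1_comp.
have hD0 : (cst (1 : R) + (expR \o -%R)) x != 0 by rewrite gt_eqF // addr_gt0.
apply: is_derive_eq (is_deriveV hD0 hD) _.
rewrite -[_ *: _]/(_ * _) -[(_ + _) x]/(1 + expR (- x)).
by field; rewrite gt_eqF // addr_gt0.
Qed.

Lemma continuous_sigmoid : continuous (@sigmoid R).
Proof. exact: is_derive_continuous is_derive_sigmoid. Qed.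

Lemma continuous_softplus : continuous softplus.
Proof. exact: is_derive_continuous is_derive_softplus. Qed.

Lemma sigmoid_lipschitz (u v : R) : u <= v -> sigmoid v - sigmoid u <= (v - u) / 4.
Proof.
move=> uv; rewrite mulrC.
exact: increment_le_of_derive_le is_derive_sigmoid uv (fun x _ => sigmoid_var_le x).
Qed.

Lemma softplus_ge0 (x : R) : 0 <= softplus x.
Proof. by rewrite ln_ge0 // lerDl expR_ge0. Qed.

Lemma softplus_lipschitz (a b : R) : softplus a <= softplus b + `|a - b|.
Proof.
have [ab|ba] := leP a b.
  have := increment_ge_of_derive_ge (m := 0) is_derive_softplus ab.
  rewrite mul0r subr_ge0 => /(_ (fun x _ => ltW (sigmoid_gt0 x))) spab.
  by rewrite (le_trans spab) // lerDl.
rewrite gtr0_norm ?subr_gt0 // addrC -lerBlDr -[a - b]mul1r.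
exact: increment_le_of_derive_le is_derive_softplus (ltW ba) (fun x _ => ltW (sigmoid_lt1 x)).
Qed.

(* With [p = sigmoid u], [softplus (t + u) - softplus u = ln (1 - p + p e^t)]:
   this is Hoeffding's lemma for a Bernoulli(p) variable, and the [1/8] comes
   from [sigmoid' <= 1/4]. *)
Lemma softplus_quadratic_ub (u t : R) :
  softplus (t + u) <= softplus u + t * sigmoid u + t ^+ 2 / 8.
Proof.
pose G := softplus \o shift u - sigmoid u \*: id - (8 : R)^-1 \*: id ^+ 2.
have dG (s : R) : is_derive s (1 : R) G (sigmoid (s + u) - sigmoid u - s / 4).
  apply: is_derive_eq (is_deriveB (is_deriveB
    (@is_derive1_comp _ softplus (shift u) s _ _
      (is_derive_softplus (s + u)) (is_derive_shift s 1 u))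
    (is_deriveZ (sigmoid u) (is_derive_id s 1)))
    (is_deriveZ 8^-1 (is_deriveX 2 (is_derive_id s 1)))) _.
  by rewrite !scaler1 -[_ *: _]/(_ * _) /=; field.
have GE (s : R) : G s = softplus (s + u) - s * sigmoid u - s ^+ 2 / 8.
  by rewrite -[G s]/(softplus (s + u) - sigmoid u * s - 8^-1 * s ^+ 2); field.
suff : G t <= G 0 by rewrite !GE add0r mul0r expr0n /= mul0r !subr0; lra.
have [t0|t0] := leP 0 t.
  have := increment_le_of_derive_le (M := 0) dG t0.
  rewrite mul0r subr_le0; apply=> c; rewrite in_itv /= => /andP[c0 _].
  by have := @sigmoid_lipschitz u (c + u) (ler_wpDl c0 (lexx u)); lra.
have := increment_ge_of_derive_ge (m := 0) dG (ltW t0).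
rewrite mul0r subr_ge0; apply=> c; rewrite in_itv /= => /andP[_ c0].
by have := @sigmoid_lipschitz (c + u) u (ler_wnDl c0 (lexx u)); lra.
Qed.

End softplus.

Section logloss.
Context {R : realType}.
Implicit Types F G y z w : R.

Lemma ln_sigmoid (x : R) : ln (sigmoid x) = - softplus (- x).
Proof. by rewrite sigmoidE lnV // posrE addr_gt0 // expR_gt0. Qed.

Lemma logloss_softplus F y : logloss F y = y * softplus (- F) + (1 - y) * softplus F.
Proof. by rewrite /logloss -sigmoidN !ln_sigmoid opprK; ring. Qed.

Lemma logloss0 F : logloss F 0 = softplus F.
Proof. by rewrite logloss_softplus mul0r add0r subr0 mul1r. Qed.

Lemma logloss1 F : logloss F 1 = softplus (- F).
Proof. by rewrite logloss_softplus subrr mul0r addr0 mul1r. Qed.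

Lemma logloss_ge0 F y : y = 0 \/ y = 1 -> 0 <= logloss F y.
Proof. by case=> ->; rewrite ?logloss0 ?logloss1 softplus_ge0. Qed.

Lemma logloss_lipschitz F G y : y = 0 \/ y = 1 ->
  logloss G y <= logloss F y + `|G - F|.
Proof.
case=> ->; rewrite ?logloss0 ?logloss1; first exact: softplus_lipschitz.
by have := softplus_lipschitz (- G) (- F); rewrite opprK [- G + F]addrC distrC.
Qed.

Lemma logloss_le_norm F y : y = 0 \/ y = 1 -> logloss F y <= `|F| + ln 2.
Proof.
move=> y01; have := logloss_lipschitz 0 F y01.
have -> : logloss 0 y = ln 2.
  by case: y01 => ->; rewrite ?logloss0 ?logloss1 ?oppr0 /softplus expR0.
by rewrite subr0 addrC.
Qed.

Lemma norm_residual_le F y z : y = 0 \/ y = 1 -> z = 0 \/ z = 1 ->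
  `|z * (y - sigmoid F)| <= z.
Proof.
move=> y01 [->|->]; first by rewrite mul0r normr0.
have s0 := sigmoid_gt0 F; have s1 := sigmoid_lt1 F.
rewrite mul1r; case: y01 => ->; first by rewrite sub0r normrN gtr0_norm ?ltW.
by rewrite ger0_norm ?subr_ge0 ?ltW // ltrBlDl ltrDr.
Qed.

Lemma logloss_shift_ub F w z y : y = 0 \/ y = 1 -> z = 0 \/ z = 1 ->
  logloss (F + w * z) y <= logloss F y - w * (z * (y - sigmoid F)) + w ^+ 2 / 8 * z.
Proof.
move=> y01 [->|->]; first by rewrite !mulr0 !mul0r mulr0 subr0 !addr0.
rewrite !mulr1 !mul1r.
case: y01 => ->; rewrite ?logloss0 ?logloss1.
  by have := softplus_quadratic_ub F w; rewrite [F + w]addrC; lra.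
have := softplus_quadratic_ub (- F) (- w).
by rewrite sigmoidN sqrrN opprD addrC; lra.
Qed.

End logloss.

Section quadratic_optimization.
Context {R : realType}.

Lemma sqr_le_of_quadratic_lb (a Z c : R) : 0 < Z ->
  (forall t, 0 <= c - t * a + t ^+ 2 / 8 * Z) -> 2 * a ^+ 2 <= Z * c.
Proof.
move=> Z0 lb; have := lb (4 * a / Z).
have -> : c - 4 * a / Z * a + (4 * a / Z) ^+ 2 / 8 * Z = c - 2 * a ^+ 2 / Z.
  by field; rewrite gt_eqF.
by rewrite subr_ge0 ler_pdivrMr // [c * _]mulrC.
Qed.

Lemma multicalibration_algebra (a Z C2 V D1 D2 L0 L1 Ls : R) :
  (forall t, Ls <= L0 - t * a + t ^+ 2 / 8 * Z) ->
  L0 <= L1 + D1 -> `|a| <= Z -> (0 < Z -> Z <= C2 * V) ->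
  0 <= V -> 0 <= D1 -> 0 <= D2 ->
  `|a| <= 2 / Num.sqrt 3 * Num.sqrt C2 *
     Num.sqrt (2 * D1 + 1 / 8 * D2 + (L1 - Ls)) * Num.sqrt V.
Proof.
move=> lb L01 aZ ZCV V0 D10 D20.
set S := 2 * D1 + 1 / 8 * D2 + (L1 - Ls).
have rhs0 : 0 <= 2 / Num.sqrt 3 * Num.sqrt C2 * Num.sqrt S * Num.sqrt V.
  by rewrite !mulr_ge0 ?divr_ge0 ?sqrtr_ge0.
have [Z0|Z0] := leP Z 0; first exact: le_trans aZ (le_trans Z0 rhs0).
have c0 : 0 <= L0 - Ls.
  by have := lb 0; rewrite mul0r expr0n /= !mul0r subr0 addr0 subr_ge0.
(* The claimed constant is not tight: this only uses [L1 - Ls >= - D1]. *)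
have cS : L0 - Ls <= 8 / 3 * S by rewrite /S; lra.
have CV0 : 0 < C2 * V := lt_le_trans Z0 (ZCV Z0).
have C0 : 0 <= C2.
  rewrite leNgt; apply/negP => C2neg.
  by have := mulr_le0_ge0 (ltW C2neg) V0; lra.
have a2 : a ^+ 2 <= 4 / 3 * C2 * S * V.
  have := @sqr_le_of_quadratic_lb a Z (L0 - Ls) Z0.
  have /[swap]/[apply] : forall t, 0 <= L0 - Ls - t * a + t ^+ 2 / 8 * Z.
    by move=> t; have := lb t; lra.
  have := ler_wpM2r c0 (ZCV Z0).
  have := ler_wpM2l (ltW CV0) cS.
  lra.
have S0 : 0 <= S by lra.
rewrite -ler_sqr ?nnegrE // real_normK ?num_real // !exprMn exprVn !sqr_sqrtr //.
by have -> : (2 : R) ^+ 2 * 3^-1 = 4 / 3 by field.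
Qed.
End quadratic_optimization.

Section expectation.
Context {d : measure_display} {Omega : measurableType d} {R : realType}
  (P : probability Omega R).
Implicit Types (f g u : Omega -> R) (k : R).

Definition Pintegrable f := P.-integrable setT (EFin \o f).

Lemma Pintegrable_le f g : measurable_fun setT f ->
  (forall w, `|f w| <= `|g w|) -> Pintegrable g -> Pintegrable f.
Proof.
move=> mf fg ig; apply: (le_integrable measurableT _ _ ig).
  exact/measurable_EFinP.
by move=> w _ /=; rewrite lee_fin.
Qed.

Lemma Pintegrable_bounded f k : measurable_fun setT f ->
  (forall w, `|f w| <= k) -> Pintegrable f.
Proof.
move=> mf fk; apply: Pintegrable_le (finite_measure_integrable_cst P k measurableT) => //.
by move=> w; rewrite (le_trans (fk w)) // ler_norm.
Qed.

Lemma Pintegrable01 f : measurable_fun setT f ->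
  (forall w, f w = 0 \/ f w = 1) -> Pintegrable f.
Proof.
move=> mf f01; apply: (Pintegrable_bounded mf (k := 1)) => w.
by case: (f01 w) => ->; rewrite ?normr0 ?normr1.
Qed.

Lemma Pintegrable_norm f : measurable_fun setT f -> Pintegrable f ->
  Pintegrable (fun w => `|f w|).
Proof.
move=> mf; apply: Pintegrable_le => [|w]; last by rewrite normr_id.
exact: measurableT_comp (@normr_measurable _ _) mf.
Qed.

Lemma PintegrableD f g : Pintegrable f -> Pintegrable g ->
  Pintegrable (fun w => f w + g w).
Proof. exact: integrableD. Qed.

Lemma PintegrableB f g : Pintegrable f -> Pintegrable g ->
  Pintegrable (fun w => f w - g w).
Proof. exact: integrableB. Qed.

Lemma PintegrableZ k f : Pintegrable f -> Pintegrable (fun w => k * f w).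
Proof.
move=> fi; apply: eq_integrable (integrableZl measurableT k fi) => // w _.
Qed.

Lemma ExD f g : Pintegrable f -> Pintegrable g ->
  Ex P (fun w => f w + g w) = Ex P f + Ex P g.
Proof. exact: RintegralD. Qed.

Lemma ExB f g : Pintegrable f -> Pintegrable g ->
  Ex P (fun w => f w - g w) = Ex P f - Ex P g.
Proof. exact: RintegralB. Qed.

Lemma ExZ k f : Pintegrable f -> Ex P (fun w => k * f w) = k * Ex P f.
Proof. exact: RintegralZl. Qed.

Lemma le_Ex f g : Pintegrable f -> Pintegrable g ->
  (forall w, f w <= g w) -> Ex P f <= Ex P g.
Proof. by move=> ? ? fg; exact: le_Rintegral. Qed.

Lemma Ex_ge0 f : (forall w, 0 <= f w) -> 0 <= Ex P f.
Proof. by move=> f0; exact: Rintegral_ge0. Qed.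

Lemma le_normr_Ex f : Pintegrable f -> `|Ex P f| <= Ex P (fun w => `|f w|).
Proof. exact: le_normr_Rintegral. Qed.

Lemma Ex_gt0 (A : set Omega) u : measurable A -> (0 < P A)%E ->
  measurable_fun setT u -> Pintegrable u ->
  (forall w, 0 <= u w) -> (forall w, A w -> 0 < u w) -> 0 < Ex P u.
Proof.
move=> mA PA0 mu iu u0 Au; rewrite lt_def Ex_ge0 // andbT.
apply/eqP => Eu0.
have Iu0 : (\int[P]_w `|(EFin \o u) w| = 0)%E.
  rewrite -[RHS](_ : (\int[P]_w (u w)%:E)%E = 0)%E.
    by apply: eq_integral => w _ /=; rewrite ger0_norm.
  have fin_u := integrable_fin_num measurableT iu.
  by rewrite -[LHS](fineK fin_u) -/(Ex P u) Eu0.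
have mEu : measurable_fun setT (EFin \o u) by exact/measurable_EFinP.
have [N [mN PN0 uN]] := (ae_eq_integral_abs P measurableT mEu).1 Iu0.
have AN : A `<=` N.
  by move=> w Aw; apply: uN => /(_ I) /= /eqP; rewrite eqe gt_eqF ?Au.
by move: PA0; rewrite (subset_measure0 mA mN AN PN0) ltxx.
Qed.

Lemma indic01 (b : Omega -> R) : (forall w, b w = 0 \/ b w = 1) ->
  \1_[set w | b w = 1] = b.
Proof.
move=> b01; apply/funext => w; rewrite indicE.
case: (b01 w) => bw; rewrite bw; last by rewrite mem_set.
by rewrite memNset //= bw => /eqP; rewrite eq_sym oner_eq0.
Qed.

Lemma measurable_eq1 (b : Omega -> R) : measurable_fun setT b ->
  measurable [set w | b w = 1].
Proof. by move=> mb; have := mb measurableT _ (measurable_set1 1); rewrite setTI. Qed.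

Lemma Ex_01 (b : Omega -> R) : measurable_fun setT b ->
  (forall w, b w = 0 \/ b w = 1) -> Ex P b = fine (P [set w | b w = 1]).
Proof.
move=> mb b01; rewrite -[in RHS](setIT [set _ | _]) -integral_indic.
- by rewrite indic01.
- exact: measurableT.
- exact: measurable_eq1.
Qed.

Lemma Ex01_gt0 (b : Omega -> R) : measurable_fun setT b ->
  (forall w, b w = 0 \/ b w = 1) -> 0 < Ex P b -> (0 < P [set w | b w = 1%R])%E.
Proof.
move=> mb b01; rewrite Ex_01 //.
by case: (P _) => [r| |] /=; rewrite ?lte_fin ?ltxx ?ltry.
Qed.

End expectation.

Section interval_membership.
Context {R : realType}.

Lemma interval_membership01 {g : R -> R} :
  interval_membership g -> forall v, g v = 0 \/ g v = 1.
Proof. by case=> I [_ gI] v; rewrite gI; case: (v \in I); [right|left]. Qed.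

Lemma measurable_interval_membership {g : R -> R} :
  interval_membership g -> measurable_fun setT g.
Proof.
case=> I [_ gI]; have -> : g = \1_[set` I].
  apply/funext => v; rewrite gI indicE.
  by case: (boolP (v \in I)) => vI; [rewrite mem_set | rewrite memNset //; apply/negP].
exact: measurable_indic (measurable_itv I).
Qed.

End interval_membership.

Section group_bin.
Context {d d' : measure_display} {Omega : measurableType d}
  {Xt : measurableType d'} {R : realType} (P : probability Omega R)
  (X : Omega -> Xt).
Hypothesis mX : measurable_fun setT X.
Variables (h f : Xt -> R) (g : R -> R).
Hypotheses (mh : measurable_fun setT h) (h01 : forall x, h x = 0 \/ h x = 1).
Hypotheses (gG : interval_membership g) (mf : measurable_fun setT f).

Lemma measurable_group_bin : measurable_fun setT (fun w => h (X w) * g (f (X w))).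
Proof.
apply: measurable_funM (measurableT_comp mh mX) _.
exact: measurableT_comp (measurable_interval_membership gG) (measurableT_comp mf mX).
Qed.

Lemma group_bin01 w : h (X w) * g (f (X w)) = 0 \/ h (X w) * g (f (X w)) = 1.
Proof.
case: (h01 (X w)) => ->; first by left; rewrite mul0r.
by rewrite mul1r; exact: interval_membership01.
Qed.

Lemma condEx01 (Z b : Omega -> R) :
  measurable_fun setT b -> (forall w, b w = 0 \/ b w = 1) ->
  condEx P Z [set w | b w = 1] = Ex P (fun w => b w * Z w) / Ex P b.
Proof.
move=> mb b01; rewrite /condEx -Ex_01 // indic01 //.
by congr (Ex P _ / _); apply/funext => w; rewrite mulrC.
Qed.

Lemma le_CT2_ratios_sup (H : set (Xt -> R)) :
  has_ubound (CT2_ratios P X H f) -> H h -> (forall x, 0 < f x < 1) ->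
  0 < Ex P (fun w => h (X w) * g (f (X w))) ->
  Ex P (fun w => h (X w) * g (f (X w))) <=
    sup (CT2_ratios P X H f) * Ex P (fun w => h (X w) * f (X w) * (1 - f (X w))).
Proof.
move=> ubH Hh f01 Z0.
have mb : measurable_fun setT (fun w => h (X w)) := measurableT_comp mh mX.
have mfX : measurable_fun setT (fun w => f (X w)) := measurableT_comp mf mX.
have b01 w : h (X w) = 0 \/ h (X w) = 1 := h01 (X w).
have ib := Pintegrable01 P mb b01.
have Eb0 : 0 < Ex P (fun w => h (X w)).
  apply: lt_le_trans Z0 (le_Ex (Pintegrable01 P measurable_group_bin group_bin01) ib _) => w.
  have := interval_membership01 gG (f (X w)).
  by case: (b01 w) => -> [] ->; rewrite ?mul0r ?mulr0 ?mulr1.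
have mbv : measurable_fun setT (fun w => h (X w) * (f (X w) * (1 - f (X w)))).
  exact: measurable_funM mb (measurable_funM mfX (measurable_funB (measurable_cst _) mfX)).
have V0 : 0 < Ex P (fun w => h (X w) * (f (X w) * (1 - f (X w)))).
  apply: (Ex_gt0 (measurable_eq1 mb) (Ex01_gt0 mb b01 Eb0) mbv) => [|w|w /= ->].
  - apply: Pintegrable_le mbv _ ib => w.
    have /andP[f0 f1] := f01 (X w).
    rewrite normrM ler_piMr // ger0_norm; last by rewrite mulr_ge0 ?subr_ge0 ?ltW.
    by apply: mulr_ile1; rewrite ?subr_ge0 ?lerBlDr ?lerDl; apply: ltW.
  - have /andP[f0 f1] := f01 (X w).
    by case: (b01 w) => ->; rewrite ?mul0r // mul1r mulr_ge0 ?subr_ge0 ?ltW.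
  - by have /andP[f0 f1] := f01 (X w); rewrite mul1r mulr_gt0 ?subr_gt0.
have -> : (fun w => h (X w) * f (X w) * (1 - f (X w))) =
    (fun w => h (X w) * (f (X w) * (1 - f (X w)))).
  by apply/funext => w; rewrite mulrA.
rewrite -ler_pdivrMr //; apply: (ub_le_sup ubH).
exists h, g; do 3!split => //; first exact: Ex01_gt0 mb b01 Eb0.
by rewrite !condEx01 //; field; rewrite !gt_eqF.
Qed.

End group_bin.

Section expected_logloss.
Context {d d' : measure_display} {Omega : measurableType d}
  {Xt : measurableType d'} {R : realType} (P : probability Omega R)
  (X : Omega -> Xt) (Y : Omega -> R).
Hypothesis mY : measurable_fun setT Y.
Hypothesis Y01 : forall w, Y w = 0 \/ Y w = 1.
Implicit Types F G z : Omega -> R.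

Lemma measurable_logloss F : measurable_fun setT F ->
  measurable_fun setT (fun w => logloss (F w) (Y w)).
Proof.
move=> mF; have -> : (fun w => logloss (F w) (Y w)) =
    (fun w => Y w * softplus (- F w) + (1 - Y w) * softplus (F w)).
  by apply/funext => w; rewrite logloss_softplus.
have msp := continuous_measurable_fun (@continuous_softplus R).
apply: measurable_funD; apply: measurable_funM => //.
- exact: measurableT_comp msp (measurable_funN mF).
- exact: measurable_funB (measurable_cst (1 : R)) mY.
- exact: measurableT_comp msp mF.
Qed.

Lemma Pintegrable_logloss F : measurable_fun setT F -> Pintegrable P F ->
  Pintegrable P (fun w => logloss (F w) (Y w)).
Proof.
move=> mF iF; apply: Pintegrable_le (measurable_logloss mF) _
  (PintegrableD (Pintegrable_norm mF iF) (finite_measure_integrable_cst P (ln 2) measurableT)).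
move=> w; rewrite ger0_norm; last exact: logloss_ge0.
by rewrite (le_trans (logloss_le_norm _ (Y01 w))) // ler_norm.
Qed.

Lemma Ex_logloss_lipschitz F G :
  measurable_fun setT F -> Pintegrable P F ->
  measurable_fun setT G -> Pintegrable P G ->
  Ex P (fun w => logloss (G w) (Y w)) <=
    Ex P (fun w => logloss (F w) (Y w)) + Ex P (fun w => `|F w - G w|).
Proof.
move=> mF iF mG iG.
have iGF := Pintegrable_norm (measurable_funB mF mG) (PintegrableB iF iG).
have iLF := Pintegrable_logloss mF iF.
rewrite -(ExD iLF iGF); apply: le_Ex => [||w].
- exact: Pintegrable_logloss.
- exact: PintegrableD.
- by rewrite distrC; exact: logloss_lipschitz.
Qed.

Section residual.
Variables (F z : Omega -> R).
Hypotheses (mF : measurable_fun setT F) (mz : measurable_fun setT z).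
Hypothesis z01 : forall w, z w = 0 \/ z w = 1.

Lemma measurable_residual :
  measurable_fun setT (fun w => z w * (Y w - sigmoid (F w))).
Proof.
apply: measurable_funM mz (measurable_funB mY _).
exact: measurableT_comp (continuous_measurable_fun (@continuous_sigmoid R)) mF.
Qed.

Lemma Pintegrable_residual : Pintegrable P (fun w => z w * (Y w - sigmoid (F w))).
Proof.
apply: (Pintegrable_le measurable_residual _ (Pintegrable01 P mz z01)) => w.
rewrite [X in _ <= X]ger0_norm; first exact: norm_residual_le.
by case: (z01 w) => ->.
Qed.

Lemma le_norm_Ex_residual :
  `|Ex P (fun w => z w * (Y w - sigmoid (F w)))| <= Ex P z.
Proof.
apply: le_trans (le_normr_Ex Pintegrable_residual) _.
apply: le_Ex (Pintegrable01 P mz z01) _ => [|w]; last exact: norm_residual_le.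
exact: Pintegrable_norm measurable_residual Pintegrable_residual.
Qed.

Lemma Pintegrable_logloss_shift t : Pintegrable P F ->
  Pintegrable P (fun w => logloss (F w + t * z w) (Y w)).
Proof.
move=> iF; apply: Pintegrable_logloss.
  exact: measurable_funD mF (measurable_funM (measurable_cst t) mz).
exact: PintegrableD iF (PintegrableZ _ (Pintegrable01 P mz z01)).
Qed.

Lemma Ex_logloss_shift_ub t : Pintegrable P F ->
  Ex P (fun w => logloss (F w + t * z w) (Y w)) <=
    Ex P (fun w => logloss (F w) (Y w))
    - t * Ex P (fun w => z w * (Y w - sigmoid (F w)))
    + t ^+ 2 / 8 * Ex P z.
Proof.
move=> iF; have iz := Pintegrable01 P mz z01.
have iL := Pintegrable_logloss mF iF.
have itA := PintegrableZ t Pintegrable_residual.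
have itz := PintegrableZ (t ^+ 2 / 8) iz.
rewrite -(ExZ _ Pintegrable_residual) -(ExZ _ iz) -(ExB iL itA).
rewrite -(ExD (PintegrableB iL itA) itz).
apply: le_Ex => [||w].
- exact: Pintegrable_logloss_shift.
- exact: PintegrableD (PintegrableB iL itA) itz.
- exact: logloss_shift_ub.
Qed.

End residual.

Lemma Lstar_ge0 (W : set (Xt -> R -> R)) (FT : Xt -> R) :
  (0 <= Lstar P X Y W FT)%E.
Proof.
apply: le_ereal_inf_tmp => _ [K [wt [phi [_ ->]]]].
by apply: integral_ge0 => w _; rewrite lee_fin; exact: logloss_ge0.
Qed.

Lemma Lstar_le_learner (W : set (Xt -> R -> R)) (FT : Xt -> R) phi t :
  W phi ->
  Pintegrable P (fun w => logloss (FT (X w) + t * phi (X w) (sigmoid (FT (X w)))) (Y w)) ->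
  fine (Lstar P X Y W FT) <=
    Ex P (fun w => logloss (FT (X w) + t * phi (X w) (sigmoid (FT (X w)))) (Y w)).
Proof.
move=> Wphi iL.
have LstarL : (Lstar P X Y W FT <=
    \int[P]_w (logloss (FT (X w) + t * phi (X w) (sigmoid (FT (X w)))) (Y w))%:E)%E.
  apply: ereal_inf_lbound; exists 1%N, (fun _ => t), (fun _ => phi); split=> [_ //|].
  by congr integral; apply/funext => w; rewrite big_ord1.
have iL_fin := integrable_fin_num measurableT iL.
apply: (fine_le _ iL_fin LstarL).
by rewrite ge0_fin_numE ?Lstar_ge0 // (le_lt_trans LstarL) // ltey_eq iL_fin.
Qed.

End expected_logloss.

Theorem propositionA3 (d d' : measure_display) (Omega : measurableType d)
  (Xt : measurableType d') (R : realType) (P : probability Omega R)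
  (X : Omega -> Xt) (Y : Omega -> R)
  (H : set (Xt -> R)) (W : set (Xt -> R -> R)) (FT FT1 : Xt -> R) :
  measurable_fun setT X ->
  measurable_fun setT Y ->
  (forall w, Y w = 0 \/ Y w = 1) ->
  (forall h, H h -> measurable_fun setT h /\ forall x, h x = 0 \/ h x = 1) ->
  measurable_fun setT FT -> measurable_fun setT FT1 ->
  P.-integrable setT (fun w => (FT (X w))%:E) ->
  P.-integrable setT (fun w => (FT1 (X w))%:E) ->
  P.-integrable setT (fun w => ((FT1 (X w) - FT (X w)) ^+ 2)%:E) ->
  (forall h g, H h -> interval_membership g ->
     W (fun x v => h x * g v)) ->
  has_ubound (CT2_ratios P X H (fun x => sigmoid (FT x))) ->
  let fT := fun x => sigmoid (FT x) in
  let epsT := Ex P (fun w => logloss (FT1 (X w)) (Y w)) - fine (Lstar P X Y W FT) in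
  let CT := Num.sqrt (sup (CT2_ratios P X H fT)) in
  multicalibrated P X Y H fT
    (2 / Num.sqrt 3 * CT *
       Num.sqrt (2 * Ex P (fun w => `|FT1 (X w) - FT (X w)|)
                 + 1 / 8 * Ex P (fun w => (FT1 (X w) - FT (X w)) ^+ 2)
                 + epsT)).
Proof.
move=> mX mY Y01 Hmeas mFT mFT1 iFT iFT1 _ Wmem ubH fT epsT CT.
rewrite {}/CT {}/epsT {}/fT => h g Hh gG /=.
have [mh h01] := Hmeas h Hh.
have mF0 : measurable_fun setT (fun w => FT (X w)) := measurableT_comp mFT mX.
have mF1 : measurable_fun setT (fun w => FT1 (X w)) := measurableT_comp mFT1 mX.
have mfT : measurable_fun setT (fun x => sigmoid (FT x)).
  exact: measurableT_comp (continuous_measurable_fun continuous_sigmoid) mFT.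
have mz := measurable_group_bin mX mh gG mfT.
have z01 := group_bin01 X (fun x => sigmoid (FT x)) h01 gG.
have f01 x : 0 < sigmoid (FT x) < 1 by rewrite sigmoid_gt0 sigmoid_lt1.
apply: (multicalibration_algebra (Z := Ex P (fun w => h (X w) * g (sigmoid (FT (X w)))))
         (L0 := Ex P (fun w => logloss (FT (X w)) (Y w)))).
- move=> t; apply: le_trans (Ex_logloss_shift_ub mY Y01 mF0 mz z01 t iFT).
  apply: (Lstar_le_learner Y01 (Wmem h g Hh gG)).
  exact: (Pintegrable_logloss_shift mY Y01 mF0 mz z01 t iFT).
- exact: (Ex_logloss_lipschitz mY Y01 mF1 iFT1 mF0 iFT).
- exact: le_norm_Ex_residual.
- by move=> Z0; apply: le_CT2_ratios_sup.
- apply: Ex_ge0 => w; have /andP[f0 f1] := f01 (X w).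
  by case: (h01 (X w)) => ->; rewrite ?mul0r // mul1r mulr_ge0 ?subr_ge0 // ltW.
- exact: Ex_ge0.
- by apply: Ex_ge0 => w; exact: sqr_ge0.
Qed.
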